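(* Let $t \in \mathbb{N}_0$ and $b \in \mathbb{N}$ be such that $\Phi_b(x)$ divides the polynomial $T_t(x)$ below. Then $b/\mathrm{rad}(b) < 13$, where \begin{align*} T_t(x) = {}& x^{8t+27} + x^{8t+26} + x^{8t+25} + x^{8t+22} + x^{8t+20} + x^{8t+18} + x^{8t+17} - x^{8t+16} - x^{8t+15} + 2x^{6t+15} \\ & - x^{4t+26} - x^{4t+25} + x^{4t+23} - x^{4t+21} - x^{4t+20} + x^{4t+19} - x^{4t+18} - x^{4t+17} + 3x^{4t+14} - 3x^{4t+13} \\ & + x^{4t+10} + x^{4t+9} - x^{4t+8} + x^{4t+7} + x^{4t+6} - x^{4t+4} + x^{4t+2} + x^{4t+1} - 2x^{2t+12} \\ & + x^{12} + x^{11} - x^{10} - x^9 - x^7 - x^5 - x^2 - x - 1. \end{align*}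
   Context: $\Phi_b(x)$ is the $b$-th cyclotomic polynomial (the monic polynomial whose roots are exactly the primitive $b$-th roots of unity, each simple). $\mathrm{rad}(b)$ denotes the product of the distinct prime divisors of $b$ (the largest square-free divisor of $b$). *)

From mathcomp Require Import all_boot all_order all_algebra all_field.
Set Implicit Arguments. Unset Strict Implicit. Unset Printing Implicit Defensive.
Import GRing.Theory.
Local Open Scope ring_scope.

Definition nrad (b : nat) : nat := (\prod_(p <- primes b) p)%N.

Definition Tpoly (t : nat) : {poly int} :=
  'X^(8*t+27) + 'X^(8*t+26) + 'X^(8*t+25) + 'X^(8*t+22) + 'X^(8*t+20)
  + 'X^(8*t+18) + 'X^(8*t+17) - 'X^(8*t+16) - 'X^(8*t+15) + 2%:P * 'X^(6*t+15)
  - 'X^(4*t+26) - 'X^(4*t+25) + 'X^(4*t+23) - 'X^(4*t+21) - 'X^(4*t+20)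
  + 'X^(4*t+19) - 'X^(4*t+18) - 'X^(4*t+17) + 3%:P * 'X^(4*t+14) - 3%:P * 'X^(4*t+13)
  + 'X^(4*t+10) + 'X^(4*t+9) - 'X^(4*t+8) + 'X^(4*t+7) + 'X^(4*t+6)
  - 'X^(4*t+4) + 'X^(4*t+2) + 'X^(4*t+1) - 2%:P * 'X^(2*t+12)
  + 'X^12 + 'X^11 - 'X^10 - 'X^9 - 'X^7 - 'X^5 - 'X^2 - 'X - 1.

From mathcomp Require Import all_boot all_order all_algebra all_field.
From mathcomp Require Import ring.
Set Implicit Arguments. Unset Strict Implicit. Unset Printing Implicit Defensive.
Import Order.TTheory GRing.Theory Num.Theory.
Local Open Scope ring_scope.

(* Write b = d * m with m = rad b and suppose d >= 13.  Every prime factor of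
   b divides m, so z |-> z ^ (1 + m j) permutes the primitive b-th roots of
   unity, all of which are roots of T_t.  Weighting these conjugates by powers
   of the primitive d-th root z ^ m shows that, for every residue class modulo
   d, the monomials of T_t whose exponents lie in that class already sum to
   zero at z.  As |z| = 1, in such a vanishing sum no coefficient exceeds the
   sum of the absolute values of the others.
   The exponents of T_t are linear in u = 2t.  For 13 <= d <= 48 a finite
   computation over u mod d finds a monomial violating this bound, except for
   d = 13 and u = 11, 12 mod 13, where a class consists of two monomials with
   exponents 13 apart; then z ^ 26 = 1, impossible since 13 ^ 2 divides b.
   For d >= 49, each of three fixed monomials needs a partner in its class,
   and eliminating u between two of these congruences gives a nonzero integer
   of absolute value at most 48 that is divisible by d. *)

Lemma nrad_dvd b : (0 < b)%N -> (nrad b %| b)%N.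
Proof.
move=> b_gt0; rewrite /nrad {2}(prod_prime_decomp b_gt0) prime_decompE big_map /=.
rewrite big_seq [X in (_ %| X)%N]big_seq.
apply: (big_ind2 (fun x y => x %| y)%N) => // [? ? ? ? |p]; first exact: dvdn_mul.
by move=> p_b; apply: dvdn_exp; rewrite ?logn_gt0.
Qed.

Lemma prime_dvd_nrad b p : (0 < b)%N -> prime p -> (p %| b)%N -> (p %| nrad b)%N.
Proof.
move=> b_gt0 p_pr p_b; have p_primes : p \in primes b by rewrite mem_primes p_pr b_gt0.
by rewrite /nrad (big_rem p) //= dvdn_mulr.
Qed.

Lemma norm_prim_root (R : numDomainType) (z : R) n : n.-primitive_root z -> `|z| = 1.
Proof.
move=> zn; have /eqP := congr1 Num.norm (prim_expr_order zn).
by rewrite normrX normr1 pexpr_eq1 ?(prim_order_gt0 zn) // => /eqP.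
Qed.

Lemma sum_prim_root_expM (R : idomainType) (w : R) d n : d.-primitive_root w ->
  \sum_(j < d) w ^+ (j * n) = if (d %| n)%N then d%:R else 0.
Proof.
move=> wd; under eq_bigr => j _ do rewrite mulnC exprM.
case: ifP => dn.
  have -> : w ^+ n = 1 by apply/eqP; rewrite -(prim_order_dvd wd).
  by under eq_bigr => j _ do rewrite expr1n; rewrite sumr_const card_ord.
have wn_neq1 : w ^+ n != 1 by rewrite -(prim_order_dvd wd) dn.
have wnd : (w ^+ n) ^+ d = 1 by rewrite -exprM mulnC exprM (prim_expr_order wd) expr1n.
have /esym/eqP := subrX1 (w ^+ n) d.
by rewrite wnd subrr mulf_eq0 subr_eq0 (negbTE wn_neq1) => /eqP.
Qed.

Lemma eqn_mod_dvd_addMpred d e r : (0 < d)%N ->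
  (e == r %[mod d])%N = (d %| e + d.-1 * r)%N.
Proof.
move=> d_gt0; rewrite /dvdn -[in RHS](mod0n d) -[in RHS](eqn_modDr r) add0n -addnA.
by rewrite -mulSnr prednK // addnC [(d * r)%N]mulnC modnMDl.
Qed.

Lemma coprime_1addM b m j : (forall p, prime p -> (p %| b)%N -> (p %| m)%N) ->
  coprime (1 + m * j) b.
Proof.
move=> pi_bm; rewrite /coprime; set g := gcdn _ _.
have g_gt0 : (0 < g)%N by rewrite gcdn_gt0.
rewrite eqn_leq g_gt0 andbT leqNgt; apply/negP => /pdiv_prime p_pr.
have p_g := pdiv_dvd g.
have p_m := pi_bm _ p_pr (dvdn_trans p_g (dvdn_gcdr _ _)).
have := dvdn_trans p_g (dvdn_gcdl _ _).
by rewrite dvdn_addl ?dvdn_mulr // dvdn1 => /eqP p1; rewrite p1 in p_pr.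
Qed.

Lemma class_sum_eq0 (R : numDomainType) (I : Type) (s : seq I) (a : I -> R)
    (e : I -> nat) (b d m : nat) (z : R) :
  b = (d * m)%N -> (forall p, prime p -> (p %| b)%N -> (p %| m)%N) ->
  b.-primitive_root z ->
  (forall w, b.-primitive_root w -> \sum_(i <- s) a i * w ^+ e i = 0) ->
  forall r, \sum_(i <- s | (e i == r %[mod d])%N) a i * z ^+ e i = 0.
Proof.
move=> bE pi_bm zb s0 r.
have b_gt0 := prim_order_gt0 zb.
have /andP[d_gt0 m_gt0] : (0 < d)%N && (0 < m)%N by rewrite -muln_gt0 -bE.
set o := z ^+ m.
have od : d.-primitive_root o.
  have := exp_prim_root zb m.
  by rewrite (gcdn_idPl _) bE ?dvdn_mull // mulnK.
have conj_j j : b.-primitive_root (z ^+ (1 + m * j)).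
  by rewrite prim_root_exp_coprime // coprime_1addM.
have conj_exp i (j : 'I_d) : (z ^+ (1 + m * j)) ^+ e i = z ^+ e i * o ^+ (j * e i).
  by rewrite -exprM mulnDl mul1n exprD -exprM mulnA [(m * j)%N]mulnC.
set R' := (d.-1 * r)%N.
have term_j i (j : 'I_d) : o ^+ (j * R') * (a i * (z ^+ (1 + m * j)) ^+ e i)
    = a i * z ^+ e i * o ^+ (j * (e i + R')).
  by rewrite conj_exp mulnDr exprD; ring.
have : \sum_(j < d) o ^+ (j * R') * \sum_(i <- s) a i * (z ^+ (1 + m * j)) ^+ e i = 0.
  by apply: big1 => j _; rewrite s0 ?mulr0 //; apply: conj_j.
under eq_bigr => j _ do rewrite mulr_sumr.
rewrite exchange_big /=.
under eq_bigr => i _ do rewrite (eq_bigr _ (fun j _ => term_j i j)) -mulr_sumr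
  sum_prim_root_expM // -eqn_mod_dvd_addMpred //.
have d_neq0 : d%:R != 0 :> R by rewrite pnatr_eq0 -lt0n.
move=> weighted; apply: (mulIf d_neq0); rewrite mul0r -[RHS]weighted.
rewrite big_mkcond mulr_suml; apply: eq_bigr => i _.
by case: ifP; rewrite ?mulr0 ?mul0r.
Qed.

Lemma vanishing_sum_norm_le (R : numDomainType) (I : eqType) (s : seq I)
    (a : I -> int) (e : I -> nat) (z : R) J :
  `|z| = 1 -> J \in s -> \sum_(i <- s) (a i)%:~R * z ^+ e i = 0 ->
  (2 * absz (a J) <= \sum_(i <- s) absz (a i))%N.
Proof.
move=> z1 Js s0.
have norm_term i : `|(a i)%:~R * z ^+ e i| = (absz (a i))%:R :> R.
  by rewrite normrM normrX z1 expr1n mulr1 natr_absz intr_norm.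
rewrite (big_rem J) //= in s0; rewrite (big_rem J) //=.
rewrite mul2n -addnn leq_add2l -(ler_nat R) natr_sum -norm_term.
have -> : (a J)%:~R * z ^+ e J = - \sum_(i <- rem J s) (a i)%:~R * z ^+ e i.
  by apply/eqP; rewrite -addr_eq0 s0.
rewrite normrN; apply: le_trans (ler_norm_sum _ _ _) (ler_sum _ _) => i _.
by rewrite norm_term.
Qed.

Lemma binomial_eq0_exprM2 (R : numDomainType) (z : R) (a a' : int) k e :
  z != 0 -> a != 0 -> `|a| = `|a'| ->
  a%:~R * z ^+ (k + e) + a'%:~R * z ^+ e = 0 -> z ^+ (k * 2) = 1.
Proof.
move=> z_neq0 a_neq0 norm_aa' /eqP.
rewrite exprD mulrA -mulrDl mulf_eq0 expf_eq0 (negbTE z_neq0) andbF orbF.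
rewrite addr_eq0 => /eqP azk.
have a2_neq0 : (a%:~R : R) ^+ 2 != 0 by rewrite expf_eq0 intr_eq0 (negbTE a_neq0) andbF.
apply: (mulfI a2_neq0); rewrite mulr1 exprM -exprMn azk sqrrN.
have : `|a'| ^+ 2 = `|a| ^+ 2 by rewrite norm_aa'.
by rewrite !real_normK ?num_real // -!rmorphXn => ->.
Qed.

Lemma root_Cyclotomic_mul (q : {poly int}) b (w : algC) :
  b.-primitive_root w -> root (map_poly intr (q * 'Phi_b)) w.
Proof.
by move=> wb; rewrite rmorphM /= rootM (Cintr_Cyclotomic wb) (root_cyclotomic wb) wb orbT.
Qed.

(* [(k, c, a)] stands for the monomial [a * x ^ (c + k * u)], [u] a parameter. *)
Definition lmono := (nat * nat * int)%type.
Definition lmslope (x : lmono) : nat := x.1.1.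
Definition lmoffset (x : lmono) : nat := x.1.2.
Definition lmcoef (x : lmono) : int := x.2.
Definition lmexp (x : lmono) (u : nat) : nat := (lmoffset x + lmslope x * u)%N.

Definition lmpoly (s : seq lmono) (u : nat) : {poly int} :=
  \sum_(x <- s) (lmcoef x)%:P * 'X^(lmexp x u).

Lemma horner_lmpoly (R : comNzRingType) (s : seq lmono) u (w : R) :
  (map_poly intr (lmpoly s u)).[w] = \sum_(x <- s) (lmcoef x)%:~R * w ^+ lmexp x u.
Proof.
rewrite rmorph_sum horner_sum; apply: eq_bigr => x _.
by rewrite rmorphM /= map_polyC map_polyXn hornerCM hornerXn.
Qed.

Definition LM (k c : nat) (a : int) : lmono := (k, c, a).

Definition Tterms : seq lmono :=
  [:: LM 4 27 1; LM 4 26 1; LM 4 25 1; LM 4 22 1; LM 4 20 1;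
      LM 4 18 1; LM 4 17 1; LM 4 16 (-1); LM 4 15 (-1); LM 3 15 2;
      LM 2 26 (-1); LM 2 25 (-1); LM 2 23 1; LM 2 21 (-1); LM 2 20 (-1);
      LM 2 19 1; LM 2 18 (-1); LM 2 17 (-1); LM 2 14 3; LM 2 13 (-3);
      LM 2 10 1; LM 2 9 1; LM 2 8 (-1); LM 2 7 1; LM 2 6 1;
      LM 2 4 (-1); LM 2 2 1; LM 2 1 1; LM 1 12 (-2); LM 0 12 1;
      LM 0 11 1; LM 0 10 (-1); LM 0 9 (-1); LM 0 7 (-1); LM 0 5 (-1);
      LM 0 2 (-1); LM 0 1 (-1); LM 0 0 (-1)].

Lemma Tpoly_lmpoly t : Tpoly t = lmpoly Tterms (2 * t).
Proof.
have Tpoly_exp n c : 'X^(n * t + c) = ('X^t) ^+ n * 'X^c :> {poly int}.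
  by rewrite exprD mulnC exprM.
have lmpoly_exp n c : 'X^(c + n * (2 * t)) = 'X^c * ('X^t) ^+ (2 * n) :> {poly int}.
  by rewrite exprD mulnA [(n * 2)%N]mulnC [(2 * n * t)%N]mulnC exprM.
rewrite /Tpoly /lmpoly /Tterms !big_cons big_nil /lmexp /lmslope /lmoffset /lmcoef /=.
by rewrite !Tpoly_exp !lmpoly_exp -['X^1]/('X : {poly int}); ring.
Qed.

Definition same_class (d u : nat) (x y : lmono) : bool :=
  (lmexp x u == lmexp y u %[mod d])%N.

Definition class_weight (d u : nat) (J : lmono) : nat :=
  sumn [seq absz (lmcoef x) | x <- Tterms & same_class d u x J].

Definition unbalanced (d u : nat) (J : lmono) : bool :=
  (class_weight d u J < 2 * absz (lmcoef J))%N.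

Lemma same_class_mod d u x y : same_class d u x y = same_class d (u %% d) x y.
Proof.
have lmexp_mod w : (lmexp w u = lmexp w (u %% d) %[mod d])%N.
  by rewrite /lmexp -modnDmr -modnMmr modnDmr.
by rewrite /same_class !lmexp_mod.
Qed.

Lemma unbalanced_mod d u J : unbalanced d u J = unbalanced d (u %% d) J.
Proof.
by rewrite /unbalanced /class_weight (eq_filter (same_class_mod d u ^~ J)).
Qed.

Lemma uniq_Tterms : uniq Tterms.
Proof. by []. Qed.

Lemma partner_of_balanced d u J : J \in Tterms -> lmcoef J != 0 ->
  ~~ unbalanced d u J -> exists2 x, x \in Tterms & (x != J) && same_class d u x J.
Proof.
move=> JT aJ_neq0 balanced; apply/hasP; apply: contraNT balanced => /hasPn lone.
rewrite /unbalanced /class_weight.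
have -> : [seq x <- Tterms | same_class d u x J] = [:: J].
  rewrite -(filter_pred1_uniq uniq_Tterms JT); apply: eq_in_filter => x xT /=.
  have [->|x_neq_J] := eqVneq x J; first by rewrite /same_class eqxx.
  by apply: negbTE; have := lone x xT; rewrite x_neq_J.
by rewrite /= mul2n -addnn ltn_add2l absz_gt0.
Qed.

Lemma balanced_of_class_sums (R : numDomainType) (z : R) d u J : `|z| = 1 ->
  (forall r, \sum_(x <- Tterms | (lmexp x u == r %[mod d])%N)
               (lmcoef x)%:~R * z ^+ lmexp x u = 0) ->
  J \in Tterms -> ~~ unbalanced d u J.
Proof.
move=> z1 class0 JT; rewrite -leqNgt /class_weight sumnE big_map.
apply: (vanishing_sum_norm_le z1); first by rewrite mem_filter /same_class eqxx.
by rewrite big_filter; apply: class0.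
Qed.

Definition exceptional (d s : nat) : bool := (d == 13)%N && ((s == 11) || (s == 12))%N.

Lemma unbalanced_small_cert :
  all (fun d => all (fun s => exceptional d s || has (unbalanced d s) Tterms)
                    (iota 0 d)) (iota 13 36).
Proof. by vm_compute. Qed.

(* [lmexp x u - lmexp y u = (lmdiff x y).1 * u + (lmdiff x y).2] *)
Definition lmdiff (x y : lmono) : int * int :=
  ((lmslope x)%:Z - (lmslope y)%:Z, (lmoffset x)%:Z - (lmoffset y)%:Z).

(* A combination of the linear forms [p.1 * u + p.2] and [q.1 * u + q.2]
   in which [u] cancels. *)
Definition eliminant (p q : int * int) : int :=
  if p.1 == 0 then p.2 else if q.1 == 0 then q.2 else q.1 * p.2 - p.1 * q.2.

Definition small_eliminant (p q : int * int) : bool :=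
  (eliminant p q != 0) && (absz (eliminant p q) <= 48)%N.

Lemma dvdz_eliminant (n u : int) (p q : int * int) :
  (n %| p.1 * u + p.2)%Z -> (n %| q.1 * u + q.2)%Z -> (n %| eliminant p q)%Z.
Proof.
case: p q => a1 c1 [a2 c2] /= n_p n_q; rewrite /eliminant /=.
have [a1_0|_] := eqVneq a1 0; first by move: n_p; rewrite a1_0 mul0r add0r.
have [a2_0|_] := eqVneq a2 0; first by move: n_q; rewrite a2_0 mul0r add0r.
have -> : a2 * c1 - a1 * c2 = a2 * (a1 * u + c1) - a1 * (a2 * u + c2) by ring.
by rewrite rpredB // dvdz_mull.
Qed.

Lemma same_class_dvdz d u x y :
  same_class d u x y -> (d%:Z %| (lmdiff x y).1 * u%:Z + (lmdiff x y).2)%Z.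
Proof.
have -> : (lmdiff x y).1 * u%:Z + (lmdiff x y).2 = (lmexp x u)%:Z - (lmexp y u)%:Z.
  by rewrite /lmdiff /lmexp /= !PoszD !PoszM; ring.
by rewrite -eqz_mod_dvd /= !modz_nat eqz_nat.
Qed.

Lemma small_eliminant_le d u (x y x' y' : lmono) :
  same_class d u x y -> same_class d u x' y' ->
  small_eliminant (lmdiff x y) (lmdiff x' y') -> (d <= 48)%N.
Proof.
move=> /same_class_dvdz xy /same_class_dvdz xy' /andP[elim_neq0 elim_le].
have := dvdz_eliminant xy xy'; rewrite /dvdz /= => /dvdn_leq.
by rewrite absz_gt0 elim_neq0 => /(_ isT)/leq_trans; apply.
Qed.

Definition pivot1 : lmono := LM 4 25 1.
Definition pivot2 : lmono := LM 2 26 (-1).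
Definition pivot3 : lmono := LM 2 14 3.

Lemma pivot_partners_cert :
  all (fun x1 => all (fun x2 => all (fun x3 =>
    [|| x1 == pivot1, x2 == pivot2, x3 == pivot3,
        small_eliminant (lmdiff x1 pivot1) (lmdiff x2 pivot2),
        small_eliminant (lmdiff x1 pivot1) (lmdiff x3 pivot3)
      | small_eliminant (lmdiff x2 pivot2) (lmdiff x3 pivot3)])
    Tterms) Tterms) Tterms.
Proof. by vm_compute. Qed.

Lemma unbalanced_large d u : (49 <= d)%N -> has (unbalanced d u) Tterms.
Proof.
move=> d_ge49; apply/negPn/negP => /hasPn balanced.
have partner J : J \in Tterms -> lmcoef J != 0 ->
    exists2 x, x \in Tterms & (x != J) && same_class d u x J.
  by move=> JT aJ_neq0; apply: partner_of_balanced (balanced J JT).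
have [x1 x1T /andP[/negbTE x1_neq c1]] := partner pivot1 isT isT.
have [x2 x2T /andP[/negbTE x2_neq c2]] := partner pivot2 isT isT.
have [x3 x3T /andP[/negbTE x3_neq c3]] := partner pivot3 isT isT.
have := allP (allP (allP pivot_partners_cert x1 x1T) x2 x2T) x3 x3T.
rewrite x1_neq x2_neq x3_neq /=.
case/or3P => [/(small_eliminant_le c1 c2) | /(small_eliminant_le c1 c3)
  | /(small_eliminant_le c2 c3)]; by rewrite leqNgt d_ge49.
Qed.

Lemma unbalanced_exists d u : (13 <= d)%N -> ~~ exceptional d (u %% d) ->
  has (unbalanced d u) Tterms.
Proof.
move=> d_ge13 not_exc; have [d_lt49 | /unbalanced_large //] := ltnP d 49.
have d_range : d \in iota 13 36 by rewrite mem_iota d_ge13.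
have u_range : (u %% d)%N \in iota 0 d by rewrite mem_iota ltn_pmod ?(leq_trans _ d_ge13).
have /allP/(_ _ u_range) := allP unbalanced_small_cert d d_range.
rewrite (negbTE not_exc) orFb; apply: sub_has => J.
by rewrite [unbalanced d u J]unbalanced_mod.
Qed.

Lemma exceptional_expr26 (R : numDomainType) (z : R) u : z != 0 ->
  exceptional 13 (u %% 13) ->
  (forall r, \sum_(x <- Tterms | (lmexp x u == r %[mod 13])%N)
               (lmcoef x)%:~R * z ^+ lmexp x u = 0) ->
  z ^+ 26 = 1.
Proof.
move=> z_neq0 /andP[_ u_exc] class0.
have two_term_class x y : [seq w <- Tterms | same_class 13 u w y] = [:: x; y] ->
    lmexp x u = (13 + lmexp y u)%N -> lmcoef x != 0 ->
    `|lmcoef x| = `|lmcoef y| -> z ^+ 26 = 1.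
  move=> cls xy x_neq0 norm_xy.
  apply: (binomial_eq0_exprM2 (k := 13) (e := lmexp y u) z_neq0 x_neq0 norm_xy).
  by have := class0 (lmexp y u); rewrite -big_filter cls !big_cons big_nil addr0 xy.
have class_u v : [seq w <- Tterms | same_class 13 u w v]
    = [seq w <- Tterms | same_class 13 (u %% 13) w v].
  by apply: eq_filter => w; apply: same_class_mod.
case/orP: u_exc => /eqP u_mod.
- apply: (two_term_class (LM 2 20 (-1)) (LM 2 7 1)); last by [].
  + by rewrite class_u u_mod; vm_compute.
  + by rewrite /lmexp /= addnA.
  + by [].
- apply: (two_term_class (LM 2 19 1) (LM 2 6 1)); last by [].
  + by rewrite class_u u_mod; vm_compute.
  + by rewrite /lmexp /= addnA.
  + by [].
Qed.

Theorem mainTheorem9 (t b : nat) (hb : (0 < b)%N)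
  (hdiv : exists q : {poly int}, Tpoly t = q * 'Phi_b) :
  (divn b (nrad b) < 13)%N.
Proof.
rewrite ltnNge; apply/negP => d_ge13.
set m := nrad b in d_ge13; set d := (b %/ m)%N in d_ge13.
have bE : b = (d * m)%N by rewrite divnK // nrad_dvd.
have pi_bm p : prime p -> (p %| b)%N -> (p %| m)%N := prime_dvd_nrad hb.
have [z zb] := C_prim_root_exists hb.
set u := (2 * t)%N.
have T_root (w : algC) : b.-primitive_root w ->
    \sum_(x <- Tterms) (lmcoef x)%:~R * w ^+ lmexp x u = 0.
  move=> wb; rewrite -horner_lmpoly -Tpoly_lmpoly; apply/rootP.
  by case: hdiv => q ->; apply: root_Cyclotomic_mul.
have class0 := class_sum_eq0 bE pi_bm zb T_root.
have [exc | not_exc] := boolP (exceptional d (u %% d)%N); last first.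
  have /hasP[J JT] := unbalanced_exists d_ge13 not_exc.
  by apply/negP/(balanced_of_class_sums (norm_prim_root zb) class0 JT).
have d13 : d = 13%N by case/andP: exc => /eqP.
rewrite d13 in exc class0 bE.
have z_neq0 : z != 0 by rewrite (prim_root_eq0 zb) -lt0n.
have : (b %| 26)%N by rewrite (prim_order_dvd zb) (exceptional_expr26 z_neq0 exc class0).
have : (13 * 13 %| b)%N by rewrite bE dvdn_pmul2l // pi_bm // bE dvdn_mulr.
by move/dvdn_trans/[apply].
Qed.
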